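(* Let $\mathfrak g$ be a finite-dimensional complex Lie algebra and $e_1,\dots,e_N\in\mathfrak g$ linear semi-invariants that are pairwise non-proportional. If the Jordan–Kronecker invariants of $\mathfrak g$ contain no Kronecker $3\times3$ block and at most one Kronecker $1\times1$ block, then $e_1,\dots,e_N$ are linearly independent.
   Context: An element $e\in\mathfrak g$, $e\ne0$, is a linear semi-invariant if there is $\chi\in\mathfrak g^*$ with $[u,e]=\chi(u)e$ for all $u\in\mathfrak g$ (equivalently $\mathbb Ce$ is an ideal). For $x\in\mathfrak g^*$, $\mathcal A_x$ is the skew form $(\xi,\eta)\mapsto\langle x,[\xi,\eta]\rangle$. By the Jordan–Kronecker theorem a pair of skew forms on a finite-dimensional complex space decomposes into Jordan $2n\times2n$ blocks and Kronecker $(2k-1)\times(2k-1)$ blocks ($k\ge1$; the $1\times1$ block is a pair of zero $1\times1$ matrices), uniquely up to order. The Kronecker blocks in the JK invariants of $\mathfrak g$ are those of $(\mathcal A_x,\mathcal A_a)$ for $(x,a)$ in a nonempty Zariski open subset of $\mathfrak g^*\times\mathfrak g^*$, where they are constant. *)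

From HB Require Import structures.
From mathcomp Require Import all_boot all_order all_algebra.
From mathcomp Require Import mpoly.
Set Implicit Arguments. Unset Strict Implicit. Unset Printing Implicit Defensive.
Import Order.TTheory GRing.Theory Num.Theory.
Local Open Scope ring_scope.

Section JK.
Variable C : numClosedFieldType.

Definition is_lie_bracket (n : nat) (br : 'rV[C]_n -> 'rV[C]_n -> 'rV[C]_n) :=
  [/\ (forall (c : C) x y z, br (c *: x + y) z = c *: br x z + br y z),
      (forall (c : C) x y z, br x (c *: y + z) = c *: br x y + br x z),
      (forall x, br x x = 0) &
      (forall x y z, br x (br y z) + br y (br z x) + br z (br x y) = 0)].

(* g^* is identified with 'rV_n through the pairing <x, xi> = sum_i x_i xi_i *)
Definition dpair (n : nat) (x xi : 'rV[C]_n) : C := \sum_(i < n) x 0 i * xi 0 i.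

Definition linear_semi_invariant (n : nat) (br : 'rV[C]_n -> 'rV[C]_n -> 'rV[C]_n)
    (e : 'rV[C]_n) :=
  e != 0 /\ exists chi : 'rV[C]_n, forall u, br u e = dpair chi u *: e.

Definition formA (n : nat) (br : 'rV[C]_n -> 'rV[C]_n -> 'rV[C]_n) (x : 'rV[C]_n)
  : 'M[C]_n := \matrix_(i, j) dpair x (br (delta_mx 0 i) (delta_mx 0 j)).

(* JordanB lam m : Jordan 2(m+1) x 2(m+1) block with finite eigenvalue lam,
   JordanInf m   : Jordan 2(m+1) x 2(m+1) block with infinite eigenvalue,
   Kron k        : Kronecker (2k+1) x (2k+1) block (Kron 0 is the 1x1 zero block,
                   Kron 1 the 3x3 block). *)
Inductive jkblock := JordanB of C & nat | JordanInf of nat | Kron of nat.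

Definition jksize (b : jkblock) : nat :=
  match b with
  | JordanB _ m => (m.+1).*2
  | JordanInf m => (m.+1).*2
  | Kron k => k.*2.+1
  end.

(* skew matrix [[0, M], [-M^T, 0]] with M an s x t matrix, nat-indexed *)
Definition skewblk (s : nat) (M : nat -> nat -> C) (i j : nat) : C :=
  if (i < s)%N && (s <= j)%N then M i (j - s)%N
  else if (s <= i)%N && (j < s)%N then - M j (i - s)%N
  else 0.

Definition jordanE (lam : C) (p q : nat) : C :=
  if p == q then lam else if q == p.+1 then 1 else 0.
Definition idE (p q : nat) : C := if p == q then 1 else 0.

Definition blkA (b : jkblock) : nat -> nat -> C :=
  match b with
  | JordanB lam m => skewblk m.+1 (jordanE lam)
  | JordanInf m => skewblk m.+1 idE
  | Kron k => skewblk k.+1 idE                        (* (k+1) x k : [I_k ; 0] *)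
  end.
Definition blkB (b : jkblock) : nat -> nat -> C :=
  match b with
  | JordanB _ m => skewblk m.+1 idE
  | JordanInf m => skewblk m.+1 (jordanE 0)
  | Kron k => skewblk k.+1 (fun p q => if p == q.+1 then 1 else 0) (* [0 ; I_k] *)
  end.

Fixpoint blkdiag (f : jkblock -> nat -> nat -> C) (bs : seq jkblock) (i j : nat) : C :=
  match bs with
  | [::] => 0
  | b :: bs' =>
      let s := jksize b in
      if (i < s)%N then (if (j < s)%N then f b i j else 0)
      else if (j < s)%N then 0
      else blkdiag f bs' (i - s)%N (j - s)%N
  end.

Definition JK_decomposition (n : nat) (A B : 'M[C]_n) (bs : seq jkblock) :=
  (\sum_(b <- bs) jksize b)%N = n /\
  exists2 P : 'M[C]_n, P \in unitmx &
    P *m A *m P^T = \matrix_(i, j) blkdiag blkA bs i j /\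
    P *m B *m P^T = \matrix_(i, j) blkdiag blkB bs i j.

Definition is_Kron (k : nat) (b : jkblock) : bool :=
  if b is Kron k' then k' == k else false.

(* The Jordan--Kronecker invariants of g contain no Kronecker 3x3 block and at
   most one Kronecker 1x1 block: for all (x, a) in a nonempty Zariski open subset
   of g^* x g^* (containing the nonvanishing locus of a nonzero polynomial) the
   pair (A_x, A_a) has a JK decomposition with these Kronecker blocks. *)
Definition JK_no3_atmost1_one (n : nat) (br : 'rV[C]_n -> 'rV[C]_n -> 'rV[C]_n) :=
  exists2 p : {mpoly C[n + n]}, p != 0 &
    forall x a : 'rV[C]_n, p.@[fun i => row_mx x a 0 i] != 0 ->
      exists bs, JK_decomposition (formA br x) (formA br a) bs /\
        (count (is_Kron 1) bs = 0)%N /\ (count (is_Kron 0) bs <= 1)%N.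

End JK.

From HB Require Import structures.
From mathcomp Require Import all_boot all_order all_algebra.
From mathcomp Require Import mpoly.
From mathcomp Require Import ring.
Import Order.TTheory GRing.Theory Num.Theory.
Local Open Scope ring_scope.
Set Implicit Arguments. Unset Strict Implicit.

(** If two non-proportional semi-invariants e1, e2 had the same character f,
   then for every x in g^* the vector w(x) = <x,e2> e1 - <x,e1> e2 would again
   be a semi-invariant of character f with <x, w(x)> = 0, hence a kernel vector
   of A_x; as w is linear, w(x) + t w(a) lies in the kernel of A_x + t A_a for
   all t.  In a Jordan-Kronecker normal form such a kernel vector of degree at
   most one can only live in the 1x1 and 3x3 Kronecker blocks, so with no 3x3
   block and at most one 1x1 block w(x) and w(a) are collinear.  This fails
   wherever <x,e1><a,e2> - <x,e2><a,e1> is nonzero, which is a dense open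
   condition.  Hence distinct semi-invariants have distinct characters, and
   eigenvectors of the operators [u, -] with distinct joint eigenvalues are
   linearly independent. *)

Lemma poly_eq0_of_roots (R : numDomainType) (r : {poly R}) :
  (forall t, root r t) -> r = 0.
Proof.
move=> r_roots; apply: (@roots_geq_poly_eq0 _ _ [seq i%:R | i <- iota 0 (size r)]).
- by apply/allP => t _; apply: r_roots.
- by rewrite map_inj_uniq ?iota_uniq //; apply: mulrIn; rewrite oner_neq0.
- by rewrite size_map size_iota.
Qed.

Lemma mmap_muni (R S : comNzRingType) k (f : {rmorphism R -> S})
    (h : 'I_k.+1 -> S) (p : {mpoly R[k.+1]}) :
  mmap f h p = (map_poly (mmap f (h \o widen_ord (leqnSn k))) (muni p)).[h ord_max].
Proof.
rewrite muniE rmorph_sum /= horner_sum {1}/mmap; apply: eq_bigr => m _.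
rewrite -mul_polyC rmorphM /= map_polyC map_polyXn /=.
rewrite hornerCM hornerXn mmapZ mmapX /mmap1 big_ord_recr /= -mulrA.
by congr (_ * (_ * _)); apply: eq_bigr => i _; rewrite mnmE.
Qed.

Lemma mpoly_eq0_of_meval (R : numDomainType) k (p : {mpoly R[k]}) :
  (forall v, p.@[v] = 0) -> p = 0.
Proof.
elim: k p => [|k IHk] p p_eval0.
  have p0 : p@_0 = 0 by rewrite -(p_eval0 (fun _ => 0)) -{2}[p]mpolyKC mevalC.
  by rewrite -[p]mpolyKC p0 mpolyC0.
have muni0 : muni p = 0.
  apply/polyP => j; rewrite coef0; apply: IHk => v.
  rewrite -coef_map; suff -> : map_poly (meval v) (muni p) = 0 by rewrite coef0.
  apply: poly_eq0_of_roots => t; apply/rootP.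
  pose vt i := if unlift ord_max i is Some i' then v i' else t.
  rewrite -(p_eval0 vt) /meval (@mmap_muni _ _ _ idfun) /vt unlift_none.
  congr (_.[_]); apply: eq_map_poly => q; apply: meval_eq => i /=.
  have -> : widen_ord (leqnSn k) i = lift ord_max i by apply: val_inj; rewrite [RHS]lift_max.
  by rewrite liftK.
rewrite -(comp_mpoly_id p) /comp_mpoly (@mmap_muni _ _ _ (mpolyC _ (R:=R))).
by rewrite muni0 rmorph0 horner0.
Qed.

Lemma row_mx_split (T : Type) n (v : 'I_(n + n) -> T) :
  exists x a : 'rV[T]_n, v =1 (fun i => row_mx x a 0 i).
Proof.
exists (\row_i v (lshift n i)), (\row_i v (rshift n i)) => i.
by rewrite -(splitK i); case: (split i) => l; rewrite ?row_mxEl ?row_mxEr mxE.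
Qed.

Lemma row_neq0_coord (R : nzRingType) n (u : 'rV[R]_n) :
  u != 0 -> exists j, u 0 j != 0.
Proof.
move=> u_nz; suff /existsP[j uj] : [exists j, u 0 j != 0] by exists j.
apply: contraNT u_nz => /existsPn u0; apply/eqP/rowP => j.
by rewrite mxE; apply/eqP/negbNE/u0.
Qed.

Lemma nonproportional_free (K : fieldType) (V : lmodType K) (v w : V) :
  w != 0 -> (forall c, v != c *: w) ->
  forall a b, a *: v + b *: w = 0 -> a = 0 /\ b = 0.
Proof.
move=> w_nz v_w a b vw0.
have a0 : a = 0.
  apply/eqP; apply: contraNT (v_w (- (a^-1 * b))) => a_nz; apply/eqP.
  rewrite -[v](scalerK a_nz) scaleNr -scalerA -scalerN; congr (_ *: _).
  by apply/eqP; rewrite -addr_eq0 vw0.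
by move: vw0; rewrite a0 scale0r add0r => /eqP; rewrite scaler_eq0 (negPf w_nz) orbF => /eqP.
Qed.

Lemma joint_eigenvectors_free (K : fieldType) (V : lmodType K) (A : Type)
    (act : A -> {linear V -> V}) N (e : 'I_N -> V) (chi : 'I_N -> A -> K) :
  (forall i, e i != 0) -> (forall i u, act u (e i) = chi i u *: e i) ->
  (forall i j, i != j -> exists u, chi i u != chi j u) ->
  forall c : 'I_N -> K, \sum_(i < N) c i *: e i = 0 -> forall i, c i = 0.
Proof.
elim: N e chi => [|N IHN] e chi e_nz e_eigen chi_sep c sum_c0; first by case.
pose wd := widen_ord (leqnSn N).
have wd_max i : wd i != ord_max by rewrite -val_eqE /= neq_ltn ltn_ord.
have c_wd0 i : c (wd i) = 0.
  have [u chi_u] := chi_sep _ _ (wd_max i).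
  suff /eqP : c (wd i) * (chi (wd i) u - chi ord_max u) = 0.
    by rewrite mulf_eq0 subr_eq0 (negPf chi_u) orbF => /eqP.
  apply: (IHN (e \o wd) (chi \o wd) _ _ _
    (fun j => c (wd j) * (chi (wd j) u - chi ord_max u))) => [j | j u' | j j' jj' | ].
  - exact: e_nz.
  - exact: e_eigen.
  - by apply: chi_sep; apply: contra jj' => /eqP/(congr1 val)/eqP.
  (* apply [act u - chi ord_max u] to the relation: this kills its last term *)
  have := congr1 (fun v => act u v - chi ord_max u *: v) sum_c0.
  rewrite linear0 scaler0 subr0 linear_sum scaler_sumr -sumrB big_ord_recr /=.
  rewrite linearZ /= e_eigen !scalerA [_ * c _]mulrC subrr addr0 => E.
  rewrite -[RHS]E; apply: eq_bigr => j _.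
  by rewrite linearZ /= e_eigen !scalerA -scalerBl mulrBr [chi _ _ * _]mulrC.
have c_max0 : c ord_max = 0.
  move: sum_c0; rewrite big_ord_recr /= big1 => [|j _]; last by rewrite c_wd0 scale0r.
  by rewrite add0r => /eqP; rewrite scaler_eq0 (negPf (e_nz _)) orbF => /eqP.
move=> i; case: (unliftP ord_max i) => [j ->|->] //.
by have -> : lift ord_max j = wd j by apply: val_inj; rewrite /= [LHS]lift_max.
Qed.

Section CanonicalBlocks.
Variable C : numClosedFieldType.
Implicit Types (y : nat -> C) (M A B : nat -> nat -> C) (b : jkblock C) (bs : seq (jkblock C)).

Definition vecmat (s : nat) y M (j : nat) : C := \sum_(0 <= i < s) y i * M i j.

(* [y0 + t y1] is a left kernel vector of [A + t B] for every [t]. *)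
Definition pencil_ker (s : nat) A B (y0 y1 : nat -> C) : Prop :=
  [/\ forall j, (j < s)%N -> vecmat s y0 A j = 0,
      forall j, (j < s)%N -> vecmat s y1 B j = 0 &
      forall j, (j < s)%N -> vecmat s y0 B j + vecmat s y1 A j = 0].

Lemma vecmat_eq0 s y M j : (forall i, (i < s)%N -> y i = 0) -> vecmat s y M j = 0.
Proof.
by move=> y0; rewrite /vecmat big_nat big1 // => i /andP[_ /y0->]; rewrite mul0r.
Qed.

Lemma vecmat_split s r y M j :
  vecmat (s + r) y M j = vecmat s y M j + \sum_(0 <= i < r) y (s + i)%N * M (s + i)%N j.
Proof.
rewrite /vecmat (big_cat_nat (n := s)) ?leq_addr //; congr (_ + _).
by rewrite -{1}[s]add0n big_addn addKn; apply: eq_bigr => i _; rewrite addnC.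
Qed.

Lemma sum_nat_delta r y t :
  \sum_(0 <= i < r) y i * (if i == t then 1 else 0) = if (t < r)%N then y t else 0.
Proof.
rewrite (eq_bigr (fun i => if i == t then y i else 0)) => [|i _].
  by rewrite -big_mkcond big_nat1_eq.
by case: eqP; rewrite ?mulr1 ?mulr0.
Qed.

Lemma vecmat_skewblk s r M y j :
  vecmat (s + r) y (skewblk s M) j =
  if (j < s)%N then - \sum_(0 <= i < r) y (s + i)%N * M j i
  else \sum_(0 <= i < s) y i * M i (j - s)%N.
Proof.
rewrite vecmat_split /vecmat /skewblk; case: ltnP => js.
- rewrite big_nat big1 ?add0r => [|i /andP[_ si]]; last by rewrite andbF leqNgt si mulr0.
  by rewrite -sumrN; apply: eq_bigr => i _; rewrite andbF leq_addr addKn mulrN.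
- rewrite [X in _ + X]big1 ?addr0 => [|i _]; last by rewrite ltnNge leq_addr !andbF mulr0.
  by rewrite big_nat [RHS]big_nat; apply: eq_bigr => i /andP[_ ->].
Qed.

Lemma skew_id_ker s r y : (r <= s)%N ->
  (forall j, (j < s + r)%N -> vecmat (s + r) y (skewblk s (idE C)) j = 0) ->
  forall i, (i < s + r)%N -> (i < r)%N || (s <= i)%N -> y i = 0.
Proof.
move=> rs yK i isr /orP[ir | si].
- have := yK (s + i)%N; rewrite ltn_add2l ir vecmat_skewblk ltnNge leq_addr addKn /=.
  by under eq_bigr do rewrite /idE; rewrite sum_nat_delta (leq_trans ir rs) => ->.
- have i_s : (i - s < r)%N by rewrite ltn_subLR.
  have := yK (i - s)%N; rewrite (ltn_addl _ i_s) vecmat_skewblk (leq_trans i_s rs).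
  under eq_bigr do rewrite /idE eq_sym.
  by rewrite sum_nat_delta i_s subnKC // => /(_ isT)/eqP; rewrite oppr_eq0 => /eqP.
Qed.

Definition shiftE (p q : nat) : C := if p == q.+1 then 1 else 0.

Lemma skew_shift_ker k y :
  (forall j, (j < k.+1 + k)%N -> vecmat (k.+1 + k) y (skewblk k.+1 shiftE) j = 0) ->
  forall i, (0 < i < k.+1 + k)%N -> y i = 0.
Proof.
move=> yK [//|i] /andP[_ ik]; case: (ltnP i k) => [ik' | ki].
- have := yK (k.+1 + i)%N; rewrite ltn_add2l ik' vecmat_skewblk ltnNge leq_addr addKn /=.
  by rewrite /shiftE sum_nat_delta ltnS ik' => ->.
- have i_k : (i - k < k)%N by rewrite ltn_subLR // -addSn.
  have jk : ((i - k).+1 < k.+1 + k)%N by rewrite addSn ltnS ltn_addr.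
  have := yK _ jk; rewrite vecmat_skewblk ltnS i_k.
  under eq_bigr do rewrite /shiftE eqSS eq_sym.
  by rewrite sum_nat_delta i_k addSn subnKC // => /eqP; rewrite oppr_eq0 => /eqP.
Qed.

Lemma kron_cross k y0 y1 q : (q < k)%N ->
  vecmat (k.+1 + k) y0 (skewblk k.+1 shiftE) (k.+1 + q)
  + vecmat (k.+1 + k) y1 (skewblk k.+1 (idE C)) (k.+1 + q) = y0 q.+1 + y1 q.
Proof.
move=> qk; rewrite !vecmat_skewblk ltnNge leq_addr addKn /= /shiftE sum_nat_delta ltnS qk.
by under eq_bigr do rewrite /idE; rewrite sum_nat_delta ltnS (ltnW qk).
Qed.

Lemma kron_pencil_ker k y0 y1 : (2 <= k)%N ->
  pencil_ker (k.+1 + k) (skewblk k.+1 (idE C)) (skewblk k.+1 shiftE) y0 y1 ->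
  forall i, (i < k.+1 + k)%N -> y0 i = 0 /\ y1 i = 0.
Proof.
move=> k2 [yA yB yC].
have y0K i : (i < k.+1 + k)%N -> i != k -> y0 i = 0.
  by move=> ik ink; apply: skew_id_ker yA _ ik _; rewrite // -neq_ltn.
have y1K i : (0 < i < k.+1 + k)%N -> y1 i = 0 by apply: skew_shift_ker.
(* [y0] can only be nonzero at [k] and [y1] only at [0]; as [k >= 2], the cross
   condition at [q = k - 1] and at [q = 0] forces [y0 k = 0] and [y1 0 = 0]. *)
have cross q : (q < k)%N -> y0 q.+1 + y1 q = 0.
  by move=> qk; rewrite -(kron_cross y0 y1 qk) yC // ltn_add2l.
have k_pos : (0 < k)%N := ltnW k2.
move=> i ik; split.
- have [->|] := eqVneq i k; last exact: y0K.
  have := cross k.-1; rewrite ltn_predL k_pos prednK // y1K ?addr0; first by apply.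
  by rewrite ltn_predRL k2 (leq_ltn_trans (leq_pred k) (ltn_addr _ (ltnSn k))).
- case: i ik => [_|i ik]; last by apply: y1K.
  have := cross 0%N k_pos; rewrite y0K ?add0r ?(ltn_eqF k2) //.
  by rewrite ltn_addr.
Qed.

Lemma jkblock_pencil_ker b y0 y1 : ~~ is_Kron 0 b -> ~~ is_Kron 1 b ->
  pencil_ker (jksize b) (blkA b) (blkB b) y0 y1 ->
  forall i, (i < jksize b)%N -> y0 i = 0 /\ y1 i = 0.
Proof.
have skew_id_ker_full s y :
    (forall j, (j < s + s)%N -> vecmat (s + s) y (skewblk s (idE C)) j = 0) ->
    forall i, (i < s + s)%N -> y i = 0.
  by move=> yK i si; apply: (skew_id_ker (leqnn s) yK si); case: ltnP.
case: b => [lam m | m | k] /= nK0 nK1; rewrite -?addnn.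
- move=> [_ yB yC] i im; have y1K := skew_id_ker_full _ _ yB.
  have y0K : forall i, (i < m.+1 + m.+1)%N -> y0 i = 0.
    apply: skew_id_ker_full => j jm.
    by rewrite -(yC j jm) [X in _ + X]vecmat_eq0 ?addr0 //; exact: y1K.
  by rewrite y0K ?y1K.
- move=> [yA _ yC] i im; have y0K := skew_id_ker_full _ _ yA.
  have y1K : forall i, (i < m.+1 + m.+1)%N -> y1 i = 0.
    apply: skew_id_ker_full => j jm.
    by rewrite -(yC j jm) [X in X + _]vecmat_eq0 ?add0r //; exact: y0K.
  by rewrite y0K ?y1K.
- by case: k nK0 nK1 => [|[|k]] // _ _; rewrite -addSn; apply: kron_pencil_ker.
Qed.

Lemma vecmat_blkdiag_cons f b bs r y j :
  vecmat (jksize b + r) y (blkdiag f (b :: bs)) j =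
  if (j < jksize b)%N then vecmat (jksize b) y (f b) j
  else vecmat r (fun i => y (jksize b + i)%N) (blkdiag f bs) (j - jksize b).
Proof.
rewrite vecmat_split /vecmat /=; case: ltnP => jb.
- rewrite [X in _ + X]big1 ?addr0 => [|i _]; last by rewrite ltnNge leq_addr mulr0.
  by rewrite big_nat [RHS]big_nat; apply: eq_bigr => i /andP[_ ->].
- rewrite big_nat big1 ?add0r => [|i /andP[_ ->]]; last by rewrite mulr0.
  by apply: eq_bigr => i _; rewrite ltnNge leq_addr addKn.
Qed.

Lemma pencil_ker_blkdiag_cons b bs r y0 y1 :
  pencil_ker (jksize b + r) (blkdiag (@blkA C) (b :: bs)) (blkdiag (@blkB C) (b :: bs)) y0 y1 ->
  pencil_ker (jksize b) (blkA b) (blkB b) y0 y1 /\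
  pencil_ker r (blkdiag (@blkA C) bs) (blkdiag (@blkB C) bs)
    (fun i => y0 (jksize b + i)%N) (fun i => y1 (jksize b + i)%N).
Proof.
have head j : (j < jksize b)%N -> (j < jksize b + r)%N by apply: ltn_addr.
have tail j : (j < r)%N -> (jksize b + j < jksize b + r)%N by rewrite ltn_add2l.
have tailE j : (jksize b + j < jksize b)%N = false by rewrite ltnNge leq_addr.
case=> yA yB yC; split; split => j jb.
- by have := yA j (head j jb); rewrite vecmat_blkdiag_cons jb.
- by have := yB j (head j jb); rewrite vecmat_blkdiag_cons jb.
- by have := yC j (head j jb); rewrite !vecmat_blkdiag_cons jb.
- by have := yA _ (tail j jb); rewrite vecmat_blkdiag_cons tailE addKn.
- by have := yB _ (tail j jb); rewrite vecmat_blkdiag_cons tailE addKn.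
- by have := yC _ (tail j jb); rewrite !vecmat_blkdiag_cons tailE addKn.
Qed.

Fixpoint kron0_at (bs : seq (jkblock C)) (i : nat) : bool :=
  if bs is b :: bs' then
    if (i < jksize b)%N then is_Kron 0 b else kron0_at bs' (i - jksize b)
  else false.

Lemma blkdiag_pencil_ker bs y0 y1 : count (is_Kron 1) bs = 0%N ->
  pencil_ker (\sum_(b <- bs) jksize b) (blkdiag (@blkA C) bs) (blkdiag (@blkB C) bs) y0 y1 ->
  forall i, (i < \sum_(b <- bs) jksize b)%N -> ~~ kron0_at bs i -> y0 i = 0 /\ y1 i = 0.
Proof.
elim: bs y0 y1 => [|b bs IHbs] y0 y1 /=; first by move=> _ _ i; rewrite big_nil.
rewrite big_cons => /eqP; rewrite addn_eq0 => /andP[nK1 /eqP bs_nK1].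
move=> /pencil_ker_blkdiag_cons[yb ybs] i ib; case: ltnP => bi nK0.
  by apply: (jkblock_pencil_ker nK0 _ yb); case: (is_Kron 1 b) nK1.
by have := IHbs _ _ bs_nK1 ybs (i - jksize b)%N; rewrite subnKC // ltn_subLR //; apply.
Qed.

Lemma kron0_at_count bs i : kron0_at bs i -> (0 < count (is_Kron 0) bs)%N.
Proof.
elim: bs i => [|b bs IHbs] i //=; case: ltnP => _ => [-> // | /IHbs].
by rewrite addn_gt0 orbC => ->.
Qed.

Lemma kron0_at_uniq bs i j : (count (is_Kron 0) bs <= 1)%N ->
  kron0_at bs i -> kron0_at bs j -> i = j.
Proof.
elim: bs i j => [|b bs IHbs] i j //=.
case: ltnP => bi; case: ltnP => bj.
- case: b bi bj => // k /= + + _ /eqP k0; rewrite k0.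
  by case: i j => [|i] [|j].
- move=> + K0 /kron0_at_count; rewrite K0 add1n ltnS.
  by case: count.
- move=> + /kron0_at_count + K0; rewrite K0 add1n ltnS.
  by case: count.
- move=> c /(IHbs _ _ (leq_trans (leq_addl _ _) c)) ij /ij.
  by move/(congr1 (addn (jksize b))); rewrite !subnKC.
Qed.

Definition rowfun n (u : 'rV[C]_n) (k : nat) : C := \sum_(i < n | val i == k) u 0 i.

Lemma rowfunE n (u : 'rV[C]_n) (i : 'I_n) : rowfun u i = u 0 i.
Proof. by rewrite /rowfun (big_pred1 i). Qed.

Lemma rowfun_mulmx n (u : 'rV[C]_n) M (j : 'I_n) :
  (u *m \matrix_(i, j) M i j) 0 j = vecmat n (rowfun u) M j.
Proof. by rewrite mxE /vecmat big_mkord; apply: eq_bigr => i _; rewrite mxE rowfunE. Qed.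

Definition blkdiag_mx n (f : jkblock C -> nat -> nat -> C) bs : 'M[C]_n :=
  \matrix_(i, j) blkdiag f bs i j.

Lemma row_support1 n (u : 'rV[C]_n) t :
  (forall i : 'I_n, val i != t -> u 0 i = 0) ->
  u = rowfun u t *: \row_(i < n) (if val i == t then 1 else 0).
Proof.
move=> u_t; apply/rowP => i; rewrite !mxE.
by case: eqP => [<-|/eqP/u_t ->]; rewrite ?rowfunE ?mulr1 ?mulr0.
Qed.

Lemma blkdiag_pencil_ker_support n bs (u0 u1 : 'rV[C]_n) :
  (\sum_(b <- bs) jksize b)%N = n ->
  count (is_Kron 1) bs = 0%N -> (count (is_Kron 0) bs <= 1)%N ->
  u0 *m blkdiag_mx n (@blkA C) bs = 0 -> u1 *m blkdiag_mx n (@blkB C) bs = 0 ->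
  u0 *m blkdiag_mx n (@blkB C) bs + u1 *m blkdiag_mx n (@blkA C) bs = 0 ->
  exists t, forall i : 'I_n, val i != t -> u0 0 i = 0 /\ u1 0 i = 0.
Proof.
move=> sz nK1 nK0 uA uB uC.
have entry (v : 'rV[C]_n) j : v = 0 -> v 0 j = 0 by move->; rewrite mxE.
have u_ker : pencil_ker n (blkdiag (@blkA C) bs) (blkdiag (@blkB C) bs) (rowfun u0) (rowfun u1).
  split=> j jn; [move: uA | move: uB | move: uC] => /(entry _ (Ordinal jn)).
  - by rewrite rowfun_mulmx.
  - by rewrite rowfun_mulmx.
  - by rewrite mxE !rowfun_mulmx.
have u_vanish := blkdiag_pencil_ker nK1; rewrite sz in u_vanish.
have vanish_at (i : 'I_n) : ~~ kron0_at bs i -> u0 0 i = 0 /\ u1 0 i = 0.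
  by move=> nK; rewrite -!rowfunE; apply: u_vanish.
case: (pickP (fun i : 'I_n => kron0_at bs i)) => [t K0t | nK0t].
- exists (val t) => i it; apply: vanish_at; apply: contra it => K0i.
  by apply/eqP; apply: kron0_at_uniq nK0 K0i K0t.
- by exists 0%N => i _; apply: vanish_at; rewrite nK0t.
Qed.

Lemma JK_pencil_ker_collinear n (A B : 'M[C]_n) bs (y0 y1 : 'rV[C]_n) :
  JK_decomposition A B bs ->
  count (is_Kron 1) bs = 0%N -> (count (is_Kron 0) bs <= 1)%N ->
  y0 *m A = 0 -> y1 *m B = 0 -> y0 *m B + y1 *m A = 0 ->
  exists r : 'rV[C]_n, exists a b : C, y0 = a *: r /\ y1 = b *: r.
Proof.
case=> sz [P P_unit [PA PB]] nK1 nK0 yA yB yC.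
have conjP (y : 'rV[C]_n) (X : 'M[C]_n) : y *m invmx P *m (P *m X *m P^T) = y *m X *m P^T.
  by rewrite !mulmxA mulmxKV.
have [t u_t] : exists t, forall i : 'I_n, val i != t ->
    (y0 *m invmx P) 0 i = 0 /\ (y1 *m invmx P) 0 i = 0.
  apply: (blkdiag_pencil_ker_support sz nK1 nK0).
  - by rewrite /blkdiag_mx -PA conjP yA mul0mx.
  - by rewrite /blkdiag_mx -PB conjP yB mul0mx.
  - by rewrite /blkdiag_mx -PA -PB !conjP -mulmxDl yC mul0mx.
exists (\row_(i < n) (if val i == t then 1 else 0) *m P).
exists (rowfun (y0 *m invmx P) t), (rowfun (y1 *m invmx P) t).
by rewrite !scalemxAl -!row_support1 ?mulmxKV // => i /u_t[].
Qed.

End CanonicalBlocks.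

Section Pairing.
Variables (C : numClosedFieldType) (n : nat).

Lemma dpair_is_scalar (x : 'rV[C]_n) : scalar (dpair x).
Proof.
move=> c y z; rewrite /dpair mulr_sumr -big_split.
by apply: eq_bigr => i _; rewrite !mxE mulrDr mulrCA.
Qed.

HB.instance Definition _ (x : 'rV[C]_n) :=
  GRing.isLinear.Build C 'rV[C]_n C *%R (dpair x) (dpair_is_scalar x).

Lemma dpairC (x y : 'rV[C]_n) : dpair x y = dpair y x.
Proof. by apply: eq_bigr => i _; rewrite mulrC. Qed.

Lemma dpair_delta (x : 'rV[C]_n) k : dpair x (delta_mx 0 k) = x 0 k.
Proof.
rewrite /dpair (bigD1 k) //= big1 ?addr0 => [|i /negPf ik]; first by rewrite mxE !eqxx mulr1.
by rewrite mxE ik andbF mulr0.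
Qed.

End Pairing.

Section LieAlgebra.
Variables (C : numClosedFieldType) (n : nat) (br : 'rV[C]_n -> 'rV[C]_n -> 'rV[C]_n).
Hypothesis br_lie : is_lie_bracket br.

Lemma br_is_linear u : linear (br u).
Proof. by case: br_lie => _ br_lin _ _ c x y; apply: br_lin. Qed.

HB.instance Definition _ u :=
  GRing.isLinear.Build C 'rV[C]_n 'rV[C]_n *:%R (br u) (br_is_linear u).

Lemma br_anticomm x y : br x y = - br y x.
Proof.
have [br_linl _ br_alt _] := br_lie.
have := br_alt (x + y); rewrite -{1}[x]scale1r br_linl scale1r.
by rewrite !linearD /= !br_alt add0r addr0 => /eqP; rewrite addr_eq0 => /eqP.
Qed.

Lemma mul_formA (v x : 'rV[C]_n) j :
  (v *m formA br x) 0 j = - dpair x (br (delta_mx 0 j) v).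
Proof.
rewrite mxE {2}(row_sum_delta v) !linear_sum /= -sumrN; apply: eq_bigr => i _.
by rewrite mxE br_anticomm !linearZ /= linearN mulrN.
Qed.

Lemma semi_invariant_mul_formA (f : 'rV[C]_n -> C) v x :
  (forall u, br u v = f u *: v) ->
  v *m formA br x = - dpair x v *: \row_j f (delta_mx 0 j).
Proof.
by move=> v_semi; apply/rowP => j; rewrite mul_formA v_semi linearZ /= !mxE mulNr mulrC.
Qed.

Section SameCharacter.
Variables (f : 'rV[C]_n -> C) (e1 e2 : 'rV[C]_n).
Hypotheses (e1_semi : forall u, br u e1 = f u *: e1) (e2_semi : forall u, br u e2 = f u *: e2).
Hypotheses (e2_nz : e2 != 0) (e12_nonprop : forall c : C, e1 != c *: e2).

(* [wedge_ctr x] is the contraction of [x] with [e1 /\ e2]. *)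
Definition wedge_ctr x := dpair x e2 *: e1 - dpair x e1 *: e2.
Definition wedge_det x a := dpair x e1 * dpair a e2 - dpair x e2 * dpair a e1.

Lemma wedge_ctr_semi x u : br u (wedge_ctr x) = f u *: wedge_ctr x.
Proof.
by rewrite linearB !linearZ /= e1_semi e2_semi scalerBr scalerN !scalerA !(mulrC _ (f u)).
Qed.

Lemma wedge_ctr_ker x : wedge_ctr x *m formA br x = 0.
Proof.
rewrite (semi_invariant_mul_formA x (wedge_ctr_semi x)) linearB !linearZ /=.
by rewrite mulrC subrr oppr0 scale0r.
Qed.

Lemma wedge_ctr_pencil x a :
  wedge_ctr x *m formA br a + wedge_ctr a *m formA br x = 0.
Proof.
rewrite (semi_invariant_mul_formA a (wedge_ctr_semi x)).
rewrite (semi_invariant_mul_formA x (wedge_ctr_semi a)) -scalerDl -opprD.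
rewrite !linearB !linearZ /= (_ : _ + _ = 0 :> C) ?oppr0 ?scale0r //; ring.
Qed.

Lemma wedge_ctr_free x a al be : wedge_det x a != 0 ->
  al *: wedge_ctr x + be *: wedge_ctr a = 0 -> al = 0 /\ be = 0.
Proof.
rewrite /wedge_det /wedge_ctr.
set p1 := dpair x e1; set p2 := dpair x e2; set q1 := dpair a e1; set q2 := dpair a e2.
move=> D_nz E.
have [c2 /eqP] : al * p2 + be * q2 = 0 /\ - (al * p1 + be * q1) = 0.
  apply: (nonproportional_free e2_nz e12_nonprop).
  by rewrite -E; apply/rowP => i; rewrite !mxE; ring.
rewrite oppr_eq0 => /eqP c1.
have cancel_D z : z * (p1 * q2 - p2 * q1) = 0 -> z = 0.
  by move/eqP; rewrite mulf_eq0 (negPf D_nz) orbF => /eqP.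
split; apply: cancel_D.
- rewrite (_ : _ * _ = q2 * (al * p1 + be * q1) - q1 * (al * p2 + be * q2)); last by ring.
  by rewrite c1 c2 !mulr0 subrr.
- rewrite (_ : _ * _ = p1 * (al * p2 + be * q2) - p2 * (al * p1 + be * q1)); last by ring.
  by rewrite c1 c2 !mulr0 subrr.
Qed.

Lemma wedge_ctr_noncollinear x a (r : 'rV[C]_n) al be : wedge_det x a != 0 ->
  wedge_ctr x = al *: r -> wedge_ctr a = be *: r -> False.
Proof.
move=> D_nz wx wa.
have [_ /eqP] : be = 0 /\ - al = 0.
  by apply: (wedge_ctr_free D_nz); rewrite wx wa !scalerA mulNr scaleNr mulrC subrr.
rewrite oppr_eq0 => /eqP al0.
suff /(wedge_ctr_free D_nz)[/eqP] : 1 *: wedge_ctr x + 0 *: wedge_ctr a = 0.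
  by rewrite oner_eq0.
by rewrite wx al0 !scale0r scaler0 addr0.
Qed.

Lemma wedge_det_delta : exists k j, wedge_det (delta_mx 0 k) (delta_mx 0 j) != 0.
Proof.
have [j e2j] := row_neq0_coord e2_nz.
pose g := e1 - (e1 0 j / e2 0 j) *: e2.
have [k gk] : exists k, g 0 k != 0 by apply: row_neq0_coord; rewrite subr_eq0.
exists k, j; rewrite /wedge_det ![dpair (delta_mx _ _) _]dpairC !dpair_delta.
have -> : e1 0 k * e2 0 j - e2 0 k * e1 0 j = e2 0 j * g 0 k.
  by rewrite !mxE; field.
by rewrite mulf_neq0.
Qed.

Lemma wedge_det_mpoly : exists q : {mpoly C[n + n]},
  forall x a, q.@[fun i => row_mx x a 0 i] = wedge_det x a.
Proof.
pose L (e : 'rV[C]_n) (s : 'I_n -> 'I_(n + n)) : {mpoly C[n + n]} :=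
  \sum_(i < n) (e 0 i)%:MP * 'X_(s i).
have Ll x a e : (L e (lshift n)).@[fun i => row_mx x a 0 i] = dpair x e.
  rewrite raddf_sum; apply: eq_bigr => i _.
  by rewrite /= mevalM mevalC mevalXU row_mxEl mulrC.
have Lr x a e : (L e (@rshift n n)).@[fun i => row_mx x a 0 i] = dpair a e.
  rewrite raddf_sum; apply: eq_bigr => i _.
  by rewrite /= mevalM mevalC mevalXU row_mxEr mulrC.
exists (L e1 (lshift n) * L e2 (@rshift n n) - L e2 (lshift n) * L e1 (@rshift n n)).
by move=> x a; rewrite mevalB !mevalM !Ll !Lr.
Qed.

Lemma wedge_det_eq0_of_JK x a bs :
  JK_decomposition (formA br x) (formA br a) bs ->
  count (is_Kron 1) bs = 0%N -> (count (is_Kron 0) bs <= 1)%N ->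
  wedge_det x a = 0.
Proof.
move=> JK nK1 nK0; have [//|D_nz] := eqVneq (wedge_det x a) 0.
have [r [al [be [wx wa]]]] := JK_pencil_ker_collinear JK nK1 nK0
  (wedge_ctr_ker x) (wedge_ctr_ker a) (wedge_ctr_pencil x a).
by case: (wedge_ctr_noncollinear D_nz wx wa).
Qed.

(* [wedge_det] vanishes off the zero set of the polynomial [p] of the JK
   condition, so [p * wedge_det] vanishes identically. *)
Lemma nonproportional_same_character_not_JK : ~ JK_no3_atmost1_one br.
Proof.
case=> p p_nz p_JK; have [q qE] := wedge_det_mpoly.
have q_nz : q != 0.
  have [k [j D_nz]] := wedge_det_delta.
  by apply: contraNneq D_nz => q0; rewrite -qE q0 meval0.
suff : p * q = 0 by apply/eqP; rewrite mulf_neq0.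
apply: mpoly_eq0_of_meval => v; have [x [a v_xa]] := row_mx_split v.
rewrite (meval_eq _ v_xa) mevalM qE.
have [-> | /p_JK[bs [JK [nK1 nK0]]]] := eqVneq p.@[fun i => row_mx x a 0 i] 0.
  by rewrite mul0r.
by rewrite (wedge_det_eq0_of_JK JK nK1 nK0) mulr0.
Qed.

End SameCharacter.

Lemma semi_invariants_free N (e chi : 'I_N -> 'rV[C]_n) :
  JK_no3_atmost1_one br -> (forall i, e i != 0) ->
  (forall i u, br u (e i) = dpair (chi i) u *: e i) ->
  (forall i j, i != j -> forall c : C, e i != c *: e j) ->
  forall c : 'I_N -> C, \sum_(i < N) c i *: e i = 0 -> forall i, c i = 0.
Proof.
move=> JK e_nz e_semi e_nonprop.
apply: (joint_eigenvectors_free (act := br) e_nz e_semi) => i j ij.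
have [chi_ij | chi_ij] := eqVneq (chi i) (chi j); last first.
  have [k] : exists k, (chi i - chi j) 0 k != 0 by apply: row_neq0_coord; rewrite subr_eq0.
  by rewrite !mxE subr_eq0 => chi_k; exists (delta_mx 0 k); rewrite !dpair_delta.
case: (nonproportional_same_character_not_JK (e_semi i) _ (e_nz j) (e_nonprop i j ij) JK).
by move=> u; rewrite e_semi chi_ij.
Qed.

End LieAlgebra.

Unset Implicit Arguments.

Theorem lemma11 (C : numClosedFieldType) (n : nat)
    (br : 'rV[C]_n -> 'rV[C]_n -> 'rV[C]_n) (N : nat) (e : 'I_N -> 'rV[C]_n) :
  is_lie_bracket br ->
  (forall i, linear_semi_invariant br (e i)) ->
  (forall i j, i != j -> ~ exists c : C, e i = c *: e j) ->
  JK_no3_atmost1_one br ->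
  forall c : 'I_N -> C, \sum_(i < N) c i *: e i = 0 -> forall i, c i = 0.
Proof.
move=> br_lie e_semi e_nonprop JK.
have [chi e_chi] : exists chi : 'I_N -> 'rV[C]_n,
    forall i u, br u (e i) = dpair (chi i) u *: e i.
  apply: (@fin_all_exists _ (fun=> 'rV[C]_n)
    (fun i chi => forall u, br u (e i) = dpair chi u *: e i)) => i.
  by case: (e_semi i).
apply: (semi_invariants_free br_lie JK _ e_chi) => [i | i j ij c].
  by case: (e_semi i).
by apply/eqP => e_ij; apply: (e_nonprop i j ij); exists c.
Qed.
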